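(* Let $G$ be a Nash equilibrium graph of the sum network creation game with $n$ players and $\alpha>4n$, and let $H\subseteq G$ be a non-trivial $2$-edge-connected component. Then every minimal cycle in $H$ is directed.
   Context: Sum network creation game: players $V=\{1,\dots,n\}$, parameter $\alpha>0$; a strategy of $u$ is $s_u\subseteq V\setminus\{u\}$; the graph $G_s$ has vertex set $V$ and an edge $uv$ whenever $v\in s_u$ or $u\in s_v$; the cost of $u$ is $c_u(s)=\alpha|s_u|+\sum_{v\neq u}d_{G_s}(u,v)$. A Nash equilibrium is a strategy vector from which no player can strictly decrease his cost by changing only his own strategy; a Nash equilibrium graph is $G=G_s$ for such $s$, regarded also as a directed graph with an arc $(u,v)$ whenever $u$ bought the link to $v$, i.e. $v\in s_u$. A $2$-edge-connected component is a maximal bridgeless subgraph; non-trivial means at least $3$ vertices. A cycle $C$ is minimal if $d_G(u,v)=d_C(u,v)$ for all $u,v\in C$, where $d_C$ is the distance along $C$. A cycle $u_0-u_1-\dots-u_{k-1}-u_0$ is directed if either $(u_i,u_{i+1})$ is an arc for every $i$ mod $k$, or $(u_{i+1},u_i)$ is an arc for every $i$ mod $k$. *)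

From HB Require Import structures.
From mathcomp Require Import all_boot all_order all_algebra.
Set Implicit Arguments. Unset Strict Implicit. Unset Printing Implicit Defensive.
Import Order.TTheory GRing.Theory Num.Theory.

(** Players are 'I_n.  A strategy profile assigns to each player u the set
    s u of players to whom u buys a link. *)
Definition profile (n : nat) := 'I_n -> {set 'I_n}.

Definition valid_profile n (s : profile n) := forall u, u \notin s u.

Definition adj n (s : profile n) : rel 'I_n :=
  fun u v => (v \in s u) || (u \in s v).

Fixpoint ball n (s : profile n) (k : nat) (u : 'I_n) : {set 'I_n} :=
  match k with
  | 0 => [set u]
  | k'.+1 => ball s k' u :|: [set y | [exists x in ball s k' u, adj s x y]]
  end.

(** v is reachable from u (n steps always suffice). *)
Definition reach n (s : profile n) (u v : 'I_n) := v \in ball s n u.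

(** d_G(u,v): least k with v in ball k u (meaningful when reachable). *)
Definition dist n (s : profile n) (u v : 'I_n) : nat :=
  find (fun k => v \in ball s k u) (iota 0 n.+1).

(** Cost of u; None stands for +infinity (some player unreachable). *)
Definition cost (R : realFieldType) n (alpha : R) (s : profile n) (u : 'I_n)
  : option R :=
  if [forall v, reach s u v] then
    Some (alpha * (#|s u|)%:R + (\sum_(v | v != u) dist s u v)%:R)%R
  else None.

Definition cost_le (R : realFieldType) (a b : option R) : bool :=
  match a, b with
  | Some x, Some y => (x <= y)%R
  | _, None => true
  | None, Some _ => false
  end.

Definition deviate n (s : profile n) (u : 'I_n) (S : {set 'I_n}) : profile n :=
  fun w => if w == u then S else s w.

Definition nash (R : realFieldType) n (alpha : R) (s : profile n) : Prop :=
  valid_profile s /\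
  forall (u : 'I_n) (S : {set 'I_n}), u \notin S ->
    cost_le (cost alpha s u) (cost alpha (deviate s u S) u).

(** Generic (undirected) graph notions on vertex set V and edge set E
    (a symmetric set of ordered pairs). *)
Definition erel n (V : {set 'I_n}) (E : {set 'I_n * 'I_n}) : rel 'I_n :=
  fun a b => [&& a \in V, b \in V & (a, b) \in E].

Definition G_edges n (s : profile n) : {set 'I_n * 'I_n} :=
  [set p | adj s p.1 p.2].

Definition subgraph n (s : profile n) (V : {set 'I_n}) (E : {set 'I_n * 'I_n}) :=
  E \subset G_edges s /\
  (forall a b, (a, b) \in E -> (b, a) \in E /\ a \in V /\ b \in V).

Definition graph_connected n (V : {set 'I_n}) (E : {set 'I_n * 'I_n}) :=
  forall x y, x \in V -> y \in V -> connect (erel V E) x y.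

Definition bridgeless n (V : {set 'I_n}) (E : {set 'I_n * 'I_n}) :=
  forall a b, (a, b) \in E -> connect (erel V (E :\ (a, b) :\ (b, a))) a b.

Definition two_edge_connected n (s : profile n) V E :=
  subgraph s V E /\ graph_connected V E /\ bridgeless V E.

Definition two_ec_component n (s : profile n) V E :=
  two_edge_connected s V E /\
  forall V' E', two_edge_connected s V' E' -> V \subset V' -> E \subset E' ->
    V = V' /\ E = E'.

(** A cycle u_0 - ... - u_{k-1} - u_0 of (V,E), given as the sequence c;
    u_i = cv c i for i : 'I_k (k = size c), and ordS i = i+1 mod k. *)
Definition cv n (c : seq 'I_n) (i : 'I_(size c)) : 'I_n := tnth (in_tuple c) i.
Arguments cv {n} c i.

Definition cycle_in n (c : seq 'I_n) (V : {set 'I_n}) (E : {set 'I_n * 'I_n}) :=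
  [/\ 3 <= size c, uniq c, {subset c <= V} &
      forall i : 'I_(size c), (cv c i, cv c (ordS i)) \in E].

Definition cyc_dist (k i j : nat) : nat :=
  let d := if i <= j then j - i else i - j in minn d (k - d).

Definition minimal_cycle n (s : profile n) (c : seq 'I_n) :=
  forall i j : 'I_(size c), dist s (cv c i) (cv c j) = cyc_dist (size c) i j.

Definition directed_cycle n (s : profile n) (c : seq 'I_n) :=
  (forall i : 'I_(size c), cv c (ordS i) \in s (cv c i)) \/
  (forall i : 'I_(size c), cv c i \in s (cv c (ordS i))).

(* Suppose the minimal cycle C is not directed.  Then some vertex u of C buys
   both of its links a, b on C.  Let x y be the edge of C opposite to u, bought
   by x, and J = d(u, x).  Consider two deviations: u replaces its links to a
   and b by one link to x, and x replaces its link to y by one to u.  Along C,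
   a and b stay within J + 1 of x without the links u a, u b, and y stays
   within J + 1 of u without x y; hence after its deviation u is within
   d(x, v) + 1 of every v, and x within d(u, v) + 1.  Adding the two Nash
   inequalities, the alpha saved by u is at most 2n, contradicting alpha > 4n. *)

From mathcomp Require Import all_boot all_order all_algebra.
From mathcomp Require Import zify lra.
Set Implicit Arguments. Unset Strict Implicit. Unset Printing Implicit Defensive.
Import Order.TTheory GRing.Theory Num.Theory.

Section Ball.
Variables (n : nat) (s : profile n).

Lemma adjC : symmetric (adj s).
Proof. by move=> p q; rewrite /adj orbC. Qed.

Lemma ball0 z w : (w \in ball s 0 z) = (w == z).
Proof. exact: in_set1. Qed.

Lemma ballSP k z w :
  reflect (w \in ball s k z \/ exists2 v, v \in ball s k z & adj s v w)
          (w \in ball s k.+1 z).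
Proof.
rewrite /= inE inE; apply: (iffP orP) => -[Hw | Hw]; [by left | right | by left | right].
- by case/existsP: Hw => v /andP [Hv Hvw]; exists v.
- by case: Hw => v Hv Hvw; apply/existsP; exists v; rewrite Hv.
Qed.

Lemma ball_center k z : z \in ball s k z.
Proof. by elim: k => [|k IH]; [rewrite ball0 | apply/ballSP; left]. Qed.

Lemma ball_step k z v w : v \in ball s k z -> adj s v w -> w \in ball s k.+1 z.
Proof. by move=> Hv Hvw; apply/ballSP; right; exists v. Qed.

Lemma ball_mono k m z w : k <= m -> w \in ball s k z -> w \in ball s m z.
Proof.
move=> /subnK <-; elim: (m - k) => [|d IH] Hw //.
by rewrite addSn; apply/ballSP; left; apply: IH.
Qed.

Lemma ball_adj z w : adj s z w -> w \in ball s 1 z.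
Proof. exact: ball_step (ball_center 0 z). Qed.

Lemma ball_trans m l z v w :
  v \in ball s m z -> w \in ball s l v -> w \in ball s (m + l) z.
Proof.
move=> Hv; elim: l w => [|l IH] w; first by rewrite ball0 addn0 => /eqP ->.
rewrite addnS => /ballSP [/IH | [v' /IH Hv']]; last exact: ball_step.
exact: ball_mono.
Qed.

Lemma ball_sym m z w : w \in ball s m z -> z \in ball s m w.
Proof.
elim: m w => [|m IH] w; first by rewrite !ball0 eq_sym.
case/ballSP => [/IH | [v /IH Hz Hvw]]; first exact: ball_mono.
by rewrite -add1n; apply: ball_trans Hz; apply: ball_adj; rewrite adjC.
Qed.

Lemma ball_stable k z : ball s k.+1 z = ball s k z ->
  forall m, k <= m -> ball s m z = ball s k z.
Proof.
move=> Hk; elim=> [|m IH]; first by rewrite leqn0 => /eqP ->.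
rewrite leq_eqVlt => /predU1P [<- // | /IH Hm].
by rewrite -Hk /= Hm.
Qed.

Lemma ball_card k z :
  (exists2 j, j < k & ball s j.+1 z = ball s j z) \/ k < #|ball s k z|.
Proof.
elim: k => [|k [[j lt_jk Hj] | IH]]; first by right; rewrite /= cards1.
  by left; exists j => //; apply: ltnW.
case: (eqVneq (ball s k.+1 z) (ball s k z)) => [Hk | Hne]; first by left; exists k.
right; apply: leq_ltn_trans IH (proper_card _).
rewrite properEneq eq_sym Hne; apply/subsetP => w Hw.
by apply/ballSP; left.
Qed.

Lemma ball_reach m z w : w \in ball s m z -> reach s z w.
Proof.
rewrite /reach; case: (leqP m n) => [le_mn | lt_nm Hw]; first exact: ball_mono.
case: (ball_card n z) => [[j lt_jn Hj] | lt_n].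
  rewrite (ball_stable Hj (ltnW lt_jn)).
  by rewrite -(ball_stable Hj (ltnW (ltn_trans lt_jn lt_nm))).
by have := leq_trans lt_n (max_card _); rewrite card_ord ltnn.
Qed.

Lemma dist_le m z w : w \in ball s m z -> dist s z w <= m.
Proof.
move=> Hw; have Hmin : w \in ball s (minn m n) z.
  by case: (leqP m n) => H //; apply: ball_reach Hw.
apply: leq_trans (geq_minl m n); rewrite leqNgt; apply/negP => Hlt.
have := before_find 0 Hlt; rewrite nth_iota ?add0n ?Hmin //.
by rewrite ltnS geq_minr.
Qed.

Lemma dist_ball z w : reach s z w -> w \in ball s (dist s z w) z.
Proof.
move=> Hr; have Hhas : has (fun k => w \in ball s k z) (iota 0 n.+1).
  by apply/hasP; exists n; rewrite ?mem_iota ?add0n ?ltnSn.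
have := nth_find 0 Hhas; rewrite nth_iota ?add0n //.
by move: Hhas; rewrite has_find size_iota.
Qed.

Lemma distxx z : dist s z z = 0.
Proof. by apply/eqP; rewrite -leqn0; apply: dist_le (ball_center 0 z). Qed.

End Ball.

Lemma ball_subrel n (s s' : profile n) : subrel (adj s') (adj s) ->
  forall m z w, w \in ball s' m z -> w \in ball s m z.
Proof.
move=> sub; elim=> [|m IH] z w; first by rewrite !ball0.
case/ballSP => [/IH | [v /IH Hv /sub]]; [exact: ball_mono | exact: ball_step].
Qed.

Lemma ball_lost_edge n (s s' : profile n) D z w :
  w \in ball s D z -> w \notin ball s' D z ->
  exists P Q dP dQ, [/\ adj s P Q, ~~ adj s' P Q, P \in ball s dP z,
                        w \in ball s' dQ Q & dP + dQ < D].
Proof.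
elim: D w => [|D IH] w; first by rewrite !ball0 => ->.
case/ballSP => [Hw | [v Hv Hvw]] Hn.
  have Hn' : w \notin ball s' D z by apply: contra Hn; apply: ball_mono.
  have [P [Q [dP [dQ [? ? ? ? ?]]]]] := IH w Hw Hn'.
  by exists P, Q, dP, dQ; split => //; apply: ltnW.
case Hvw' : (adj s' v w); last first.
  by exists v, w, D, 0; rewrite Hvw Hvw' Hv ball_center addn0.
have Hvn : v \notin ball s' D z by apply: contra Hn => /ball_step; apply.
have [P [Q [dP [dQ [? ? ? HQ ?]]]]] := IH v Hv Hvn.
by exists P, Q, dP, dQ.+1; split => //; [apply: ball_step HQ Hvw' | lia].
Qed.

Section Deviation.
Variables (n : nat) (s : profile n) (z : 'I_n).
Implicit Types S : {set 'I_n}.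

Lemma adj_deviate S P Q : P != z -> Q != z -> adj (deviate s z S) P Q = adj s P Q.
Proof. by move=> Pz Qz; rewrite /adj /deviate (negbTE Pz) (negbTE Qz). Qed.

Lemma adj_deviate_bought S w : w \in S -> adj (deviate s z S) z w.
Proof. by rewrite /adj /deviate eqxx => ->. Qed.

Lemma adj_deviate_mono S S' : S \subset S' ->
  subrel (adj (deviate s z S)) (adj (deviate s z S')).
Proof.
move=> /subsetP sub P Q; rewrite /adj /deviate.
by case: (P == z); case: (Q == z) => //= /orP [H | H]; apply/orP;
  by [left; apply: sub | right; apply: sub | left | right].
Qed.

Lemma adj_deviate_subset S : S \subset s z -> subrel (adj (deviate s z S)) (adj s).
Proof.
move=> sub P Q /(adj_deviate_mono sub); rewrite /adj /deviate.
by case: eqP => [-> | _]; case: eqP => [-> | _].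
Qed.

Lemma adj_deviate_lost S P Q : valid_profile s ->
  adj s P Q -> ~~ adj (deviate s z S) P Q ->
  (P = z /\ Q \in s z :\: S) \/ (Q = z /\ P \in s z :\: S).
Proof.
move=> valid_s; rewrite /adj /deviate.
case: (eqVneq P z) => [-> | Pz]; case: (eqVneq Q z) => [-> | Qz] //=.
- by rewrite orbb (negbTE (valid_s z)).
- case/orP => H; rewrite negb_or => /andP [H1 H2]; first by left; rewrite inE H H1.
  by rewrite H in H2.
- case/orP => H; rewrite negb_or => /andP [H1 H2]; first by rewrite H in H1.
  by right; rewrite inE H H2.
- by move=> ->.
Qed.

End Deviation.

(* If every shortest path from w to v uses a dropped link z a, follow
   z -> w ~> a ~> v instead: the new link and the arc w ~> a cost at most one
   more than w ~> z and z a. *)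
Lemma swap_ball n (s : profile n) z w (A : {set 'I_n}) :
  valid_profile s -> (forall v, reach s w v) ->
  {in A, forall a, a \in ball (deviate s z (s z :\: A)) (dist s w z).+1 w} ->
  forall v, v \in ball (deviate s z (w |: (s z :\: A))) (dist s w v).+1 z.
Proof.
move=> valid_s reach_w arc v.
set s0 := deviate s z (s z :\: A); set s1 := deviate s z (w |: (s z :\: A)).
have s0_s1 :=
  ball_subrel (adj_deviate_mono (s := s) (z := z) (subsetUr [set w] (s z :\: A))).
have s0_s : subrel (adj s0) (adj s) := adj_deviate_subset (subsetDl _ _).
have via_w m y : y \in ball s0 m w -> y \in ball s1 m.+1 z.
  move=> /s0_s1 Hy; rewrite -add1n; apply: ball_trans Hy.
  exact/ball_adj/adj_deviate_bought/setU11.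
have Hv := dist_ball (reach_w v).
case: (boolP (v \in ball s0 (dist s w v) w)) => [/via_w // | Hv0].
have [P [Q [dP [dQ [PQ PQ0 HP HQ lt_d]]]]] := ball_lost_edge Hv Hv0.
have [[EP HQA] | [EQ HPA]] := adj_deviate_lost valid_s PQ PQ0; subst.
- move: HQA; rewrite setDDr setDv set0U => /setIP [_ /arc HQ'].
  apply: ball_mono (via_w _ _ (ball_trans HQ' HQ)) => /=.
  by have := dist_le HP; lia.
- by apply: ball_mono (s0_s1 _ _ _ HQ) => /=; lia.
Qed.

Definition total_dist n (s : profile n) (z : 'I_n) : nat := \sum_v dist s z v.

Lemma total_distE n (s : profile n) z :
  total_dist s z = \sum_(v | v != z) dist s z v.
Proof. by rewrite /total_dist (bigD1 z) //= distxx. Qed.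

Section Nash.
Variables (R : realFieldType) (n : nat) (alpha : R) (s : profile n).
Local Open Scope ring_scope.
Hypothesis nash_s : nash alpha s.

Lemma nash_reach z w : reach s z w.
Proof.
have := proj2 nash_s z [set v | v != z]; rewrite inE eqxx => /(_ isT).
rewrite /cost; case: ifP => [/forallP // | _].
case: ifP => // /negP []; apply/forallP => v; apply: (@ball_reach _ _ 1).
case: (eqVneq v z) => [-> | vz]; first exact: ball_center.
by apply/ball_adj/adj_deviate_bought; rewrite inE.
Qed.

Lemma nash_total_dist z (S : {set 'I_n}) :
  z \notin S -> (forall w, reach (deviate s z S) z w) ->
  alpha * #|s z|%:R + (total_dist s z)%:R <=
  alpha * #|S|%:R + (total_dist (deviate s z S) z)%:R.
Proof.
move=> zS reach_S; have := proj2 nash_s z S zS; rewrite /cost.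
have -> : [forall v, reach s z v] by apply/forallP => v; apply: nash_reach.
have -> : [forall v, reach (deviate s z S) z v] by apply/forallP.
by rewrite !total_distE /= {1}/deviate eqxx.
Qed.

Lemma nash_swap z w (A : {set 'I_n}) : 0 <= alpha -> w != z -> A \subset s z ->
  {in A, forall a, a \in ball (deviate s z (s z :\: A)) (dist s w z).+1 w} ->
  alpha * #|A|%:R + (total_dist s z)%:R <= alpha + (total_dist s w + n)%N%:R.
Proof.
move=> alpha_ge0 wz sub_A arc; set S := w |: (s z :\: A).
have valid_s := proj1 nash_s.
have near := swap_ball valid_s (nash_reach w) arc.
have zS : z \notin S by rewrite !inE negb_or eq_sym wz (negbTE (valid_s z)) andbF.
have := nash_total_dist zS (fun v => ball_reach (near v)).
have card_S : (#|S| + #|A| <= #|s z| + 1)%N.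
  have := subset_leq_card sub_A; rewrite cardsU1 (cardsDS sub_A).
  by case: (w \notin _) => /=; lia.
have dist_S : (total_dist (deviate s z S) z <= total_dist s w + n)%N.
  have near_le v : (dist (deviate s z S) z v <= 1 + dist s w v)%N.
    exact: dist_le (near v).
  rewrite /total_dist; apply: leq_trans (leq_sum _ (fun v _ => near_le v)) _.
  by rewrite big_split /= sum1_card card_ord addnC.
move: card_S dist_S; rewrite -!(ler_nat R) !natrD mulr1n => card_S dist_S.
have := ler_wpM2l alpha_ge0 card_S; rewrite !mulrDr mulr1.
lra.
Qed.

Lemma nash_double_swap u x (A B : {set 'I_n}) : 2 * n%:R < alpha -> x != u ->
  A \subset s u -> B \subset s x -> (3 <= #|A| + #|B|)%N ->
  {in A, forall a, a \in ball (deviate s u (s u :\: A)) (dist s x u).+1 x} ->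
  {in B, forall b, b \in ball (deviate s x (s x :\: B)) (dist s u x).+1 u} ->
  False.
Proof.
move=> alpha_gt xu sub_A sub_B card_AB arc_A arc_B.
have alpha_ge0 : 0 <= alpha by have := ler0n R n; lra.
have swap_u := nash_swap alpha_ge0 xu sub_A arc_A.
have ux : u != x by rewrite eq_sym.
have swap_x := nash_swap alpha_ge0 ux sub_B arc_B.
move: card_AB; rewrite -(ler_nat R) natrD => card_AB.
have := ler_wpM2l alpha_ge0 card_AB; rewrite mulrDr.
move: swap_u swap_x; rewrite !natrD; lra.
Qed.

End Nash.

Lemma ball_walk n (s : profile n) (f : nat -> 'I_n) lo hi :
  lo <= hi -> (forall t, lo <= t < hi -> adj s (f t) (f t.+1)) ->
  f hi \in ball s (hi - lo) (f lo).
Proof.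
elim: hi => [|hi IH]; first by rewrite leqn0 => /eqP -> _; apply: ball_center.
rewrite leq_eqVlt => /predU1P [<- _ | lt_lo f_adj]; first by rewrite subnn ball_center.
rewrite subSn //; apply: ball_step (f_adj hi _); last by lia.
by apply: IH => // t lt_t; apply: f_adj; lia.
Qed.

Section PeriodicWalk.
Variables (n : nat) (s : profile n) (k : nat) (f : nat -> 'I_n).
Hypothesis f_periodic : forall t, f (t + k) = f t.
Hypothesis f_adj : forall t, adj s (f t) (f t.+1).

Lemma walk_directed : 0 < k ->
  (forall p, ~ (f p \in s (f p.+1) /\ f p.+2 \in s (f p.+1))) ->
  (forall t, f t.+1 \in s (f t)) \/ (forall t, f t \in s (f t.+1)).
Proof.
move=> k_gt0 no_source.
have f_periodicM m t : f (m * k + t) = f t.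
  by elim: m => [|m IH] //; rewrite mulSnr -addnA [k + t]addnC addnA f_periodic.
have backward_step t : f t \in s (f t.+1) -> f t.+1 \in s (f t.+2).
  move=> Bt; have /orP [Ft | //] := f_adj t.+1.
  by case: (no_source t).
case: (boolP [exists j : 'I_k, f j \in s (f j.+1)]) => [/existsP [j Bj] | /existsPn noB].
  right=> t; have Bfrom d : f (j + d) \in s (f (j + d).+1).
    by elim: d => [|d IH]; rewrite ?addn0 // addnS; apply: backward_step.
  have := Bfrom (j * k + t - j); rewrite subnKC; last first.
    by apply: leq_trans (leq_addr _ _); apply: leq_pmulr.
  by rewrite -addnS !f_periodicM.
left=> t; have := f_adj (t %% k).
rewrite /adj (negbTE (noB (Ordinal (ltn_pmod t k_gt0)))) orbF.
rewrite -(f_periodicM (t %/ k) (t %% k)) -(f_periodicM (t %/ k) (t %% k).+1).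
by rewrite addnS -divn_eq.
Qed.

Section MinimalWalk.
Variables (R : realFieldType) (alpha : R).
Hypothesis k_gt2 : 2 < k.
Hypothesis alpha_gt : (2 * n%:R < alpha)%R.
Hypothesis nash_s : nash alpha s.
Hypothesis f_dist : forall i j, i < j < i + k ->
  dist s (f i) (f j) = minn (j - i) (k - (j - i)).

Lemma walk_dist_back i j : i < j < i + k ->
  dist s (f j) (f i) = minn (j - i) (k - (j - i)).
Proof. by move=> ij; rewrite -(f_periodic i) f_dist; lia. Qed.

Lemma walk_neq t z : (z < t < z + k) || (t < z < t + k) -> f t != f z.
Proof.
case/orP => range; apply/eqP => E.
  by have := f_dist range; rewrite E distxx; lia.
by have := f_dist range; rewrite E distxx; lia.
Qed.

Lemma walk_ball_deviate z S lo hi m : lo <= hi -> hi - lo <= m ->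
  (forall t, lo <= t <= hi -> (z < t < z + k) || (t < z < t + k)) ->
  f hi \in ball (deviate s (f z) S) m (f lo).
Proof.
move=> le_lh le_m avoid; apply: ball_mono le_m _; apply: ball_walk => // t lt_t.
by rewrite adj_deviate ?f_adj // walk_neq // avoid //; lia.
Qed.

Lemma walk_no_source p : f p \in s (f p.+1) -> f p.+2 \in s (f p.+1) -> False.
Proof.
move=> bought_b bought_a; set q := p.+1; set i := k./2.
pose A := [set f q.+1; f p].
have sub_A : A \subset s (f q) by apply/subsetP => a /set2P [] ->.
have card_A : #|A| = 2 by rewrite cards2 walk_neq //; lia.
have arc_A xp : q < xp < q + k -> k <= 2 * (xp - q) + 2 <= k + 4 ->
    {in A, forall a,
      a \in ball (deviate s (f q) (s (f q) :\: A)) (dist s (f xp) (f q)).+1 (f xp)}.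
  move=> xp_range xp_mid a /set2P [] ->; rewrite walk_dist_back //.
    by apply: ball_sym; apply: walk_ball_deviate => *; lia.
  by rewrite -(f_periodic p); apply: walk_ball_deviate => *; lia.
(* With i = k/2 the edge between f (q + i) and f (q + i).+1 is opposite to
   u = f q: whichever endpoint x buys it, the arcs of the walk from a and b to
   x, and from the other endpoint y to u, have length at most d(u, x) + 1. *)
have /orP [bought_y | bought_y] := f_adj (q + i).
- apply: (nash_double_swap nash_s (x := f (q + i)) (B := [set f (q + i).+1])
    alpha_gt _ sub_A _ _ (arc_A _ _ _)).
  all: rewrite ?sub1set ?card_A ?cards1 ?walk_neq //; try lia.
  move=> y /set1P ->; rewrite f_dist; last lia.
  by apply: ball_sym; rewrite -(f_periodic q); apply: walk_ball_deviate => *; lia.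
- apply: (nash_double_swap nash_s (x := f (q + i).+1) (B := [set f (q + i)])
    alpha_gt _ sub_A _ _ (arc_A _ _ _)).
  all: rewrite ?sub1set ?card_A ?cards1 ?walk_neq //; try lia.
  move=> y /set1P ->; rewrite f_dist; last lia.
  by apply: walk_ball_deviate => *; lia.
Qed.

End MinimalWalk.

End PeriodicWalk.

Lemma cyc_dist_mod k i j : i < j < i + k ->
  cyc_dist k (i %% k) (j %% k) = minn (j - i) (k - (j - i)).
Proof.
move=> ij; have k_gt0 : 0 < k by lia.
rewrite -(subnKC (ltnW (proj1 (andP ij)))) -modnDml.
have : j - i < k by lia.
have : i %% k < k by rewrite ltn_pmod.
move: (i %% k) (j - i) => r d lt_rk lt_dk; rewrite addKn /cyc_dist.
case: (ltnP (r + d) k) => [lt_rdk | le_krd].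
  by rewrite modn_small //; case: ifP; lia.
rewrite -(subnK le_krd) modnDr modn_small; last by lia.
by case: ifP; lia.
Qed.

Section CycleWalk.
Variables (n : nat) (s : profile n) (c : seq 'I_n) (x0 : 'I_n).

Definition cycle_walk m := nth x0 c (m %% size c).

Lemma cycle_walk_modD m t : cycle_walk (m %% size c + t) = cycle_walk (m + t).
Proof. by rewrite /cycle_walk modnDml. Qed.

Lemma cycle_walk_mod m : cycle_walk (m %% size c) = cycle_walk m.
Proof. by rewrite -[m %% _]addn0 cycle_walk_modD addn0. Qed.

Lemma cycle_walk_modS m : cycle_walk (m %% size c).+1 = cycle_walk m.+1.
Proof. by rewrite -addn1 cycle_walk_modD addn1. Qed.

Lemma cycle_walk_periodic m : cycle_walk (m + size c) = cycle_walk m.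
Proof. by rewrite /cycle_walk modnDr. Qed.

Lemma cv_cycle_walk (i : 'I_(size c)) : cv c i = cycle_walk i.
Proof. by rewrite /cv (tnth_nth x0) /cycle_walk modn_small. Qed.

Lemma cv_ordS (i : 'I_(size c)) : cv c (ordS i) = cycle_walk i.+1.
Proof. by rewrite cv_cycle_walk cycle_walk_mod. Qed.

Lemma cycle_walk_adj V E : subgraph s V E -> cycle_in c V E ->
  forall m, adj s (cycle_walk m) (cycle_walk m.+1).
Proof.
move=> [sub_E _] [k_gt2 _ _ edge] m; have k_gt0 : 0 < size c by lia.
have := edge (Ordinal (ltn_pmod m k_gt0)); rewrite cv_ordS cv_cycle_walk /=.
rewrite cycle_walk_mod cycle_walk_modS.
by move/(subsetP sub_E); rewrite inE.
Qed.

Lemma cycle_walk_dist : minimal_cycle s c -> forall i j, i < j < i + size c ->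
  dist s (cycle_walk i) (cycle_walk j) = minn (j - i) (size c - (j - i)).
Proof.
move=> c_min i j ij; have k_gt0 : 0 < size c by lia.
have := c_min (Ordinal (ltn_pmod i k_gt0)) (Ordinal (ltn_pmod j k_gt0)).
by rewrite !cv_cycle_walk /= !cycle_walk_mod => ->; apply: cyc_dist_mod.
Qed.

Lemma directed_cycle_walk :
  (forall m, cycle_walk m.+1 \in s (cycle_walk m)) \/
  (forall m, cycle_walk m \in s (cycle_walk m.+1)) ->
  directed_cycle s c.
Proof. by case=> dir; [left | right] => i; rewrite cv_ordS cv_cycle_walk. Qed.

End CycleWalk.

Local Open Scope ring_scope.

Theorem proposition2 (R : realFieldType) (n : nat) (alpha : R) (s : profile n)
    (V : {set 'I_n}) (E : {set 'I_n * 'I_n}) (c : seq 'I_n) :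
  4 * n%:R < alpha ->
  nash alpha s ->
  two_ec_component s V E -> (3 <= #|V|)%N ->
  cycle_in c V E -> minimal_cycle s c ->
  directed_cycle s c.
Proof.
move=> alpha_gt nash_s [[sub_VE _] _] _ c_cycle c_min.
have [k_gt2 _ _ _] := c_cycle.
have x0 : 'I_n by case: c k_gt2 {c_cycle c_min} => // x0.
have {}alpha_gt : 2 * n%:R < alpha by have := ler0n R n; lra.
have f_periodic := cycle_walk_periodic c x0.
have f_adj := cycle_walk_adj x0 sub_VE c_cycle.
have f_dist := cycle_walk_dist x0 c_min.
apply: (directed_cycle_walk (x0 := x0)).
apply: (walk_directed f_periodic f_adj (ltnW (ltnW k_gt2))) => p [bought_b bought_a].
exact: (walk_no_source f_periodic f_adj k_gt2 alpha_gt nash_s f_dist bought_b bought_a).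
Qed.
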